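(* Let $(D,\prec_\vdash,\prec_\dashv,\succ_\vdash,\succ_\dashv,\alpha)$ be a Hom-quadri-dendriform algebra. Define $x\vdash y=x\prec_\vdash y+x\succ_\vdash y$ and $x\dashv y=x\prec_\dashv y+x\succ_\dashv y$ for all $x,y\in D$. Then $(D,\vdash,\dashv,\alpha)$ is a Hom-diassociative algebra.
   Context: All vector spaces are over a field of characteristic zero. A Hom-quadri-dendriform algebra is a tuple $(D,\prec_\vdash,\prec_\dashv,\succ_\vdash,\succ_\dashv,\alpha)$ with $D$ a vector space, four bilinear operations $\prec_\vdash,\prec_\dashv,\succ_\vdash,\succ_\dashv:D\times D\to D$ and a linear map $\alpha:D\to D$ such that for all $x,y,z\in D$: (Q1) $(x\prec_\vdash y)\prec_\vdash\alpha(z)=(x\prec_\dashv y)\prec_\vdash\alpha(z)=\alpha(x)\prec_\vdash(y\prec_\vdash z+y\succ_\vdash z)$; (Q2) $(x\succ_\vdash y)\prec_\vdash\alpha(z)=(x\succ_\dashv y)\prec_\vdash\alpha(z)=\alpha(x)\succ_\vdash(y\prec_\vdash z)$; (Q3) $\alpha(x)\succ_\vdash(y\succ_\vdash z)=(x\prec_\vdash y+x\succ_\vdash y)\succ_\vdash\alpha(z)=(x\prec_\dashv y+x\succ_\dashv y)\succ_\vdash\alpha(z)$; (Q4) $\alpha(x)\succ_\vdash(y\succ_\vdash z)=(x\prec_\dashv y+x\succ_\vdash y)\succ_\vdash\alpha(z)=(x\prec_\vdash y+x\succ_\dashv y)\succ_\vdash\alpha(z)$; (Q5) $(x\prec_\vdash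 y)\prec_\dashv\alpha(z)=\alpha(x)\prec_\vdash(y\prec_\dashv z+y\succ_\dashv z)$; (Q6) $(x\succ_\vdash y)\prec_\dashv\alpha(z)=\alpha(x)\succ_\vdash(y\prec_\dashv z)$; (Q7) $\alpha(x)\succ_\vdash(y\succ_\dashv z)=(x\prec_\vdash y+x\succ_\vdash y)\succ_\dashv\alpha(z)$; (Q8) $(x\prec_\dashv y)\prec_\dashv\alpha(z)=\alpha(x)\prec_\dashv(y\prec_\vdash z+y\succ_\vdash z)=\alpha(x)\prec_\dashv(y\prec_\dashv z+y\succ_\dashv z)$; (Q9) $(x\prec_\dashv y)\prec_\dashv\alpha(z)=\alpha(x)\prec_\dashv(y\prec_\vdash z+y\succ_\dashv z)=\alpha(x)\prec_\dashv(y\prec_\dashv z+y\succ_\vdash z)$; (Q10) $(x\succ_\dashv y)\prec_\dashv\alpha(z)=\alpha(x)\succ_\dashv(y\prec_\vdash z)=\alpha(x)\succ_\dashv(y\prec_\dashv z)$; (Q11) $\alpha(x)\succ_\dashv(y\succ_\vdash z)=\alpha(x)\succ_\dashv(y\succ_\dashv z)=(x\prec_\dashv y+x\succ_\dashv y)\succ_\dashv\alpha(z)$. A Hom-diassociative algebra is a tuple $(D,\dashv,\vdash,\alpha)$ with $\dashv,\vdash$ bilinear and $\alpha$ linear such that for all $x,y,z\in D$: $(x\dashv y)\dashv\alpha(z)=\alpha(x)\dashv(y\dashv z)$; $(x\dashv y)\dashv\alpha(z)=\alpha(x)\dashv(y\vdash z)$; $(x\vdash y)\dashv\alpha(z)=\alpha(x)\vdash(y\dashv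 z)$; $(x\dashv y)\vdash\alpha(z)=\alpha(x)\vdash(y\vdash z)$; $(x\vdash y)\vdash\alpha(z)=\alpha(x)\vdash(y\vdash z)$. *)

From HB Require Import structures.
From mathcomp Require Import all_boot all_algebra.
Set Implicit Arguments. Unset Strict Implicit. Unset Printing Implicit Defensive.
Import GRing.Theory.
Local Open Scope ring_scope.

Definition bilinear_op (R : fieldType) (D : lmodType R) (op : D -> D -> D) : Prop :=
  (forall (a : R) (x y z : D), op (a *: x + y) z = a *: op x z + op y z) /\
  (forall (a : R) (x y z : D), op z (a *: x + y) = a *: op z x + op z y).

Definition linear_map (R : fieldType) (D : lmodType R) (f : D -> D) : Prop :=
  forall (a : R) (x y : D), f (a *: x + y) = a *: f x + f y.

(* Hom-quadri-dendriform algebra (D, <|-, <-|, >|-, >-|, alpha):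
   plv = prec_vdash, pld = prec_dashv, sgv = succ_vdash, sgd = succ_dashv *)
Definition hom_quadri_dendriform (R : fieldType) (D : lmodType R)
  (plv pld sgv sgd : D -> D -> D) (alpha : D -> D) : Prop :=
  bilinear_op plv /\ bilinear_op pld /\ bilinear_op sgv /\ bilinear_op sgd /\
  linear_map alpha /\
  forall x y z : D,
  (plv (plv x y) (alpha z) = plv (pld x y) (alpha z) /\
      plv (pld x y) (alpha z) = plv (alpha x) (plv y z + sgv y z) /\
      plv (sgv x y) (alpha z) = plv (sgd x y) (alpha z) /\
      plv (sgd x y) (alpha z) = sgv (alpha x) (plv y z) /\
      sgv (alpha x) (sgv y z) = sgv (plv x y + sgv x y) (alpha z) /\
      sgv (plv x y + sgv x y) (alpha z) = sgv (pld x y + sgd x y) (alpha z) /\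
      sgv (alpha x) (sgv y z) = sgv (pld x y + sgv x y) (alpha z) /\
      sgv (pld x y + sgv x y) (alpha z) = sgv (plv x y + sgd x y) (alpha z) /\
      pld (plv x y) (alpha z) = plv (alpha x) (pld y z + sgd y z) /\
      pld (sgv x y) (alpha z) = sgv (alpha x) (pld y z) /\
      sgv (alpha x) (sgd y z) = sgd (plv x y + sgv x y) (alpha z) /\
      pld (pld x y) (alpha z) = pld (alpha x) (plv y z + sgv y z) /\
      pld (alpha x) (plv y z + sgv y z) = pld (alpha x) (pld y z + sgd y z) /\
      pld (pld x y) (alpha z) = pld (alpha x) (plv y z + sgd y z) /\
      pld (alpha x) (plv y z + sgd y z) = pld (alpha x) (pld y z + sgv y z) /\
      pld (sgd x y) (alpha z) = sgd (alpha x) (plv y z) /\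
      sgd (alpha x) (plv y z) = sgd (alpha x) (pld y z) /\
      sgd (alpha x) (sgv y z) = sgd (alpha x) (sgd y z) /\
      sgd (alpha x) (sgd y z) = sgd (pld x y + sgd x y) (alpha z)).

Definition hom_diassociative (R : fieldType) (D : lmodType R)
  (dl dr : D -> D -> D) (alpha : D -> D) : Prop :=
  bilinear_op dl /\ bilinear_op dr /\ linear_map alpha /\
  forall x y z : D,
  ( dl (dl x y) (alpha z) = dl (alpha x) (dl y z) /\
      dl (dl x y) (alpha z) = dl (alpha x) (dr y z) /\
      dl (dr x y) (alpha z) = dr (alpha x) (dl y z) /\
      dr (dl x y) (alpha z) = dr (alpha x) (dr y z) /\
      dr (dr x y) (alpha z) = dr (alpha x) (dr y z)).

From HB Require Import structures.
From mathcomp Require Import all_boot all_algebra.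
Local Open Scope ring_scope.
Import GRing.Theory.
Set Implicit Arguments. Unset Strict Implicit. Unset Printing Implicit Defensive.

(* By bilinearity each Hom-diassociativity identity splits into three terms;
   each term is rewritten by one of the axioms (Q1)-(Q11), and the results
   reassemble into the right-hand side. *)

Section BilinearOp.
Variables (R : fieldType) (D : lmodType R).

Lemma bilinear_opDl (op : D -> D -> D) :
  bilinear_op op -> forall x y z, op (x + y) z = op x z + op y z.
Proof. by move=> [opZDl _] x y z; have := opZDl 1 x y z; rewrite !scale1r. Qed.

Lemma bilinear_opDr (op : D -> D -> D) :
  bilinear_op op -> forall x y z, op z (x + y) = op z x + op z y.
Proof. by move=> [_ opZDr] x y z; have := opZDr 1 x y z; rewrite !scale1r. Qed.

Lemma bilinear_opD (op1 op2 : D -> D -> D) :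
  bilinear_op op1 -> bilinear_op op2 ->
  bilinear_op (fun x y => op1 x y + op2 x y).
Proof.
move=> [op1l op1r] [op2l op2r].
by split=> a x y z; rewrite ?op1l ?op2l ?op1r ?op2r scalerDr addrACA.
Qed.

End BilinearOp.

Section HomQuadriDendriform.
Variables (R : fieldType) (D : lmodType R).
Variables (plv pld sgv sgd : D -> D -> D) (alpha : D -> D).
Hypothesis hqd : hom_quadri_dendriform plv pld sgv sgd alpha.

Local Notation "x |- y" := (plv x y + sgv x y) (at level 40).
Local Notation "x -| y" := (pld x y + sgd x y) (at level 40).

Let plvDl := bilinear_opDl hqd.1.
Let pldDl := bilinear_opDl hqd.2.1.
Let sgvDr := bilinear_opDr hqd.2.2.1.
Let sgdDr := bilinear_opDr hqd.2.2.2.1.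

Lemma hom_quadri_dendriform_diassoc_identities x y z :
  [/\ (x -| y) -| alpha z = alpha x -| (y -| z),
      (x -| y) -| alpha z = alpha x -| (y |- z),
      (x |- y) -| alpha z = alpha x |- (y -| z),
      (x -| y) |- alpha z = alpha x |- (y |- z)
    & (x |- y) |- alpha z = alpha x |- (y |- z)].
Proof.
have [Q1a [Q1b [Q2a [Q2b [Q3a [Q3b [_ [_ [Q5 [Q6 [Q7 [Q8a [Q8b [_ [_
  [Q10a [Q10b [Q11a Q11b]]]]]]]]]]]]]]]]]] := hqd.2.2.2.2.2 x y z.
split.
- by rewrite pldDl Q8a Q8b -Q11b sgdDr -Q10b -Q10a -addrA.
- by rewrite pldDl Q8a -Q11b sgdDr Q11a -Q10a -addrA.
- by rewrite pldDl Q5 Q6 -Q7 sgvDr -addrA.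
- by rewrite plvDl Q1b Q2b -Q3b -Q3a sgvDr -addrA.
- by rewrite plvDl Q1a Q1b Q2a Q2b -Q3a sgvDr -addrA.
Qed.

End HomQuadriDendriform.

Theorem proposition3p3 (R : fieldType) (char0 : [pchar R] =i pred0)
  (D : lmodType R) (plv pld sgv sgd : D -> D -> D) (alpha : D -> D) :
  hom_quadri_dendriform plv pld sgv sgd alpha ->
  hom_diassociative (fun x y => pld x y + sgd x y)
                    (fun x y => plv x y + sgv x y) alpha.
Proof.
move=> hqd; have [Bplv [Bpld [Bsgv [Bsgd [lin_alpha _]]]]] := hqd.
split; first exact: bilinear_opD.
split; first exact: bilinear_opD.
split=> // x y z.
by have [] := hom_quadri_dendriform_diassoc_identities hqd x y z.
Qed.
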